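(* Let $\mathcal V\subseteq B(H)$ be a concrete operator system (a unital self-adjoint subspace) and suppose $p\in\mathcal V$ is a projection in $B(H)$. Then the abstract compression $(\mathcal V/J_p,\{\widetilde C(p_n)\}_n,p+J_p)$ is completely order isomorphic to the concrete compression operator system $p\mathcal V p\subseteq B(pH)$ (with unit $p$).
   Context: Here $\mathcal V$ carries the matrix order inherited from $B(H)$ with unit $I$; $p_n=I_n\otimes p$. Define $C(p_n)=\{x\in M_n(\mathcal V): x=x^*,\ \forall\epsilon>0\ \exists t>0 \text{ with } x+\epsilon p_n+t(I_n\otimes I-p_n)\ge 0 \text{ in } B(H^n)\}$, $J_p=\operatorname{span}(C(p)\cap -C(p))$, and $\widetilde C(p_n)=\{(x_{ij}+J_p)\in M_n(\mathcal V/J_p):(x_{ij})\in C(p_n)\}$. *)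

From HB Require Import structures.
From mathcomp Require Import all_boot all_order all_algebra.
From mathcomp Require Import complex reals.
Set Implicit Arguments.
Unset Strict Implicit.
Unset Printing Implicit Defensive.
Import Order.TTheory GRing.Theory Num.Theory.
Local Open Scope ring_scope.
Local Open Scope complex_scope.

Section OperatorSystems.
Variable R : realType.
Local Notation C := (R[i]).
Variable H : lmodType C.
(* inner product, linear in the first argument *)
Variable ip : H -> H -> C.

Definition is_inner_product : Prop :=
  [/\ (forall (a : C) (x y z : H), ip (a *: x + y) z = a * ip x z + ip y z),
      (forall x y : H, ip y x = Num.conj (ip x y)),
      (forall x : H, 0 <= ip x x) &
      (forall x : H, ip x x = 0 -> x = 0)].

(* completeness for the norm ||x|| = sqrt (ip x x) *)
Definition ip_complete : Prop :=
  forall u : nat -> H,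
    (forall e : R, 0 < e -> exists N : nat, forall m n : nat,
        (N <= m)%N -> (N <= n)%N -> ip (u m - u n) (u m - u n) < e%:C) ->
    exists l : H, forall e : R, 0 < e -> exists N : nat, forall n : nat,
        (N <= n)%N -> ip (u n - l) (u n - l) < e%:C.

Definition is_hilbert : Prop := is_inner_product /\ ip_complete.

Definition lin_op (T : H -> H) : Prop :=
  forall (a : C) (x y : H), T (a *: x + y) = a *: T x + T y.

Definition bounded_op (T : H -> H) : Prop :=
  lin_op T /\ exists M : R, forall x : H, ip (T x) (T x) <= M%:C * ip x x.

Definition adjoint_of (x y : H -> H) : Prop :=
  forall u v : H, ip (x u) v = ip u (y v).

Definition projection (p : H -> H) : Prop :=
  [/\ bounded_op p, (forall u, p (p u) = p u) & adjoint_of p p].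

Definition operator_system (V : (H -> H) -> Prop) : Prop :=
  [/\ (forall x, V x -> bounded_op x),
      V (fun u => u),
      V (fun _ => 0),
      (forall (a : C) x y, V x -> V y -> V (fun u => a *: x u + y u)) &
      (forall x, V x -> exists2 y, V y & adjoint_of x y)].

(* matrices over operators act on H^n = 'I_n -> H *)
Definition mx_apply n (X : 'M[H -> H]_n) (xi : 'I_n -> H) (i : 'I_n) : H :=
  \sum_(j < n) X i j (xi j).

Definition mx_in n (S : (H -> H) -> Prop) (X : 'M[H -> H]_n) : Prop :=
  forall i j, S (X i j).

Definition mx_sa n (X : 'M[H -> H]_n) : Prop :=
  forall xi eta : 'I_n -> H,
    \sum_(i < n) ip (mx_apply X xi i) (eta i) = \sum_(i < n) ip (xi i) (mx_apply X eta i).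

Definition mx_pos n (X : 'M[H -> H]_n) : Prop :=
  forall xi : 'I_n -> H, 0 <= \sum_(i < n) ip (mx_apply X xi i) (xi i).

(* X + e p_n + t (I_n (x) I - p_n) *)
Definition mx_shift (p : H -> H) n (e t : R) (X : 'M[H -> H]_n) : 'M[H -> H]_n :=
  \matrix_(i, j) (fun u => X i j u +
     (if i == j then e%:C *: p u + t%:C *: (u - p u) else 0)).

Definition Cpn (V : (H -> H) -> Prop) (p : H -> H) n (X : 'M[H -> H]_n) : Prop :=
  [/\ mx_in V X, mx_sa X &
      forall e : R, 0 < e -> exists2 t : R, 0 < t & mx_pos (mx_shift p e t X)].

Definition Cp (V : (H -> H) -> Prop) (p : H -> H) (x : H -> H) : Prop :=
  Cpn V p (\matrix_(i < 1, j < 1) x).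

(* J_p = span (C(p) ∩ -C(p)), finite complex linear combinations *)
Definition Jp (V : (H -> H) -> Prop) (p : H -> H) (x : H -> H) : Prop :=
  exists (k : nat) (c : 'I_k -> C) (s : 'I_k -> (H -> H)),
    (forall l, Cp V p (s l) /\ Cp V p (fun u => - s l u)) /\
    (forall u, x u = \sum_(l < k) c l *: s l u).

(* the class (X_ij + J_p) lies in C~(p_n): some representative lies in C(p_n) *)
Definition Ctilde (V : (H -> H) -> Prop) (p : H -> H) n (X : 'M[H -> H]_n) : Prop :=
  exists2 Y : 'M[H -> H]_n, Cpn V p Y & forall i j, Jp V p (fun u => Y i j u - X i j u).

(* elements of pVp, viewed as operators on H vanishing off pH *)
Definition compr (V : (H -> H) -> Prop) (p : H -> H) (y : H -> H) : Prop :=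
  exists2 x, V x & forall u, y u = p (x (p u)).

Definition mx_pos_pH (p : H -> H) n (Y : 'M[H -> H]_n) : Prop :=
  forall xi : 'I_n -> H, (forall i, p (xi i) = xi i) ->
    0 <= \sum_(i < n) ip (mx_apply Y xi i) (xi i).

(* psi : V -> pVp induces (via the quotient map V -> V/J_p) a unital complete
   order isomorphism (V/J_p, {C~(p_n)}, p + J_p) -> pVp ⊆ B(pH):
   psi is linear, maps V onto pVp, has kernel exactly J_p, sends p to the unit p
   of B(pH), and [x_ij + J_p] ∈ C~(p_n) iff [psi x_ij] >= 0 in B((pH)^n). *)
Definition compression_coi (V : (H -> H) -> Prop) (p : H -> H) (psi : (H -> H) -> (H -> H)) : Prop :=
  [/\ (forall (a : C) x y, V x -> V y -> forall u,
          psi (fun v => a *: x v + y v) u = a *: psi x u + psi y u),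
      (forall x, V x -> compr V p (psi x)),
      (forall y, compr V p y -> exists2 x, V x & forall u, psi x u = y u),
      (forall x, V x -> ((forall u, psi x u = 0) <-> Jp V p x)) &
      (forall u, psi p u = p u)] /\
  (
      (forall n (X : 'M[H -> H]_n), mx_in V X ->
          (Ctilde V p X <-> mx_pos_pH p (\matrix_(i, j) psi (X i j))))).

End OperatorSystems.

From HB Require Import structures.
From mathcomp Require Import all_boot all_order all_algebra.
From mathcomp Require Import complex reals.
From mathcomp Require Import ring lra.
From Stdlib Require Import FunctionalExtensionality.
Set Implicit Arguments.
Unset Strict Implicit.
Unset Printing Implicit Defensive.
Import Order.TTheory GRing.Theory Num.Theory.
Local Open Scope ring_scope.
Local Open Scope complex_scope.
Local Notation Re := (@complex.Re _).
Local Notation Im := (@complex.Im _).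

(* The isomorphism is induced by the compression x |-> p x p.  Split a vector
   xi of H^n as p xi + (1 - p) xi.  If X is bounded and self-adjoint with
   p X p >= 0 on (pH)^n, the cross terms between p xi and (1 - p) xi in
   <(X + e p_n + t (1 - p_n)) xi, xi> are absorbed by e |p xi|^2 and
   t |(1 - p) xi|^2 once t is large; conversely, positivity of
   X + e p_n + t (1 - p_n) on (pH)^n gives p X p >= - e for every e > 0.  So
   C(p_n) is the set of self-adjoint matrices over V with p X p >= 0 on (pH)^n.
   By polarization, C(p) and -C(p) meet exactly in the self-adjoint x with
   p x p = 0; splitting any x with p x p = 0 into real and imaginary parts shows
   that J_p is the kernel of the compression.  Finally, a matrix whose
   compression is positive has a hermitian compression, so its real part
   (X + X^* ) / 2 has the same compression, lies in C(p_n), and differs from X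
   by a matrix over J_p. *)

Section ComplexNumbers.
Variable R : realType.
Local Notation C := R[i].

Lemma ge0C (x : C) : (0 <= x) = (Im x == 0) && (0 <= Re x).
Proof. by rewrite lecE eq_sym. Qed.

Lemma ge0_add_epsC (A N : C) :
  0 <= N -> (forall e : R, 0 < e -> 0 <= A + e%:C * N) -> 0 <= A.
Proof.
case: A N => a b [n m]; rewrite !ge0C /= => /andP[/eqP-> n0] hA.
have /andP[/eqP b0 _] := hA 1 ltr01.
rewrite mul0r mulr0 !addr0 in b0; rewrite b0 eqxx /= leNgt.
apply/negP => a0.
have e0 : 0 < - a / (n + 1) by apply: divr_gt0; lra.
have /andP[_] := hA _ e0; rewrite /= mul0r subr0 mulrAC -mulrA.
have : n / (n + 1) < 1 by rewrite ltr_pdivrMr; lra.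
nra.
Qed.

Lemma conj_of_ge0_quadratic (P Q a b : C) : 0 <= P -> 0 <= Q ->
  (forall c : C, 0 <= P + Num.conj c * a + c * b + c * Num.conj c * Q) -> b = Num.conj a.
Proof.
move=> + + hc; have := hc 1; have := hc 'i%C; clear hc.
case: P => p1 p2; case: Q => q1 q2; case: a => a1 a2; case: b => b1 b2.
rewrite !ge0C /= => /andP[/eqP h1 _] /andP[/eqP h2 _] /andP[/eqP h3 _] /andP[/eqP h4 _].
apply/eqP; rewrite eq_complex /=; apply/andP; split; apply/eqP; lra.
Qed.

Lemma eq0_of_sesquilinear (a b : C) : (forall c : C, Num.conj c * a + c * b = 0) -> a = 0.
Proof.
move=> hc; have := hc 1; have := hc 'i%C; clear hc.
case: a => a1 a2; case: b => b1 b2 /= [h1 h2] [h3 h4].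
apply/eqP; rewrite eq_complex /=; apply/andP; split; apply/eqP; lra.
Qed.

(* With x1 = p xi, x2 = (1 - p) xi, the hypotheses are the positivity of
   |Y x2 + e x1|^2 and |x2 + Y x2|^2 and the bound |Y x2|^2 <= K |x2|^2: the
   cross terms B are absorbed by e N1 + W / e and D by (N2 + W) / 2, which is
   where t = K / e + K / 2 + 1 comes from. *)
Lemma block_form_ge0 (e K : R) (A B D N1 N2 W : C) :
  0 < e -> 0 <= K -> 0 <= A -> 0 <= N1 -> 0 <= N2 -> 0 <= W -> Num.conj D = D ->
  0 <= W + e%:C * B + e%:C * Num.conj B + e%:C * e%:C * N1 ->
  0 <= N2 + Num.conj D + D + W ->
  W <= K%:C * N2 ->
  0 <= A + Num.conj B + B + D + e%:C * N1 + (K / e + K / 2%:R + 1)%:C * N2.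
Proof.
case: A => a1 a2; case: B => b1 b2; case: D => d1 d2; case: N1 => n1 m1;
case: N2 => n2 m2; case: W => w1 w2.
rewrite !ge0C lecE /= => e0 K0 /andP[/eqP-> a0] /andP[/eqP-> n10] /andP[/eqP-> n20]
  /andP[/eqP-> w0] [dd].
have -> : d2 = 0 by lra.
move=> /andP[_ h1] /andP[_ h2] /andP[_ h3]; apply/andP; split; first by apply/eqP; ring.
have Ke : K / e * e = K by rewrite mulfVK // gt_eqF.
set u := K / e in Ke *.
have : 0 <= e * (a1 + b1 + b1 + d1 + e * n1 + (u + K / 2 + 1) * n2) by nra.
by rewrite pmulr_rge0 //; congr (_ <= _); ring.
Qed.

Lemma conjc_i : Num.conj 'i%C = - 'i%C :> C.
Proof. by apply/eqP; rewrite eq_complex /= oppr0 !eqxx. Qed.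

Lemma re_im_decomposition (W : lmodType C) (a b : W) :
  a = 2%:R^-1 *: (a + b) + (- 'i%C / 2%:R) *: ('i%C *: (a - b)).
Proof.
rewrite (scalerA (- 'i%C / 2%:R)) mulrAC mulNr -expr2 sqr_i opprK mul1r.
rewrite -scalerDr addrACA subrr addr0 -mulr2n -(scaler_nat 2 a) scalerA mulVf ?scale1r //.
by rewrite pnatr_eq0.
Qed.

End ComplexNumbers.

Section InnerProduct.
Variables (R : realType) (H : lmodType R[i]) (ip : H -> H -> R[i]).
Local Notation C := R[i].
Hypothesis ipDZl : forall (a : C) x y z, ip (a *: x + y) z = a * ip x z + ip y z.
Hypothesis ipC : forall x y, ip y x = Num.conj (ip x y).
Hypothesis ip_ge0 : forall x, 0 <= ip x x.

Lemma ip0l z : ip 0 z = 0.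
Proof.
have h := ipDZl 1 0 0 z; rewrite scaler0 addr0 mul1r in h.
by apply: (addrI (ip 0 z)); rewrite addr0 -h.
Qed.

Lemma ipDl x y z : ip (x + y) z = ip x z + ip y z.
Proof. by have := ipDZl 1 x y z; rewrite scale1r mul1r. Qed.

Lemma ipZl a x z : ip (a *: x) z = a * ip x z.
Proof. by have := ipDZl a x 0 z; rewrite !addr0 ip0l addr0. Qed.

Lemma ipNl x z : ip (- x) z = - ip x z.
Proof. by rewrite -scaleN1r ipZl mulN1r. Qed.

Lemma ip_suml (I : Type) (r : seq I) (P : pred I) (F : I -> H) z :
  ip (\sum_(i <- r | P i) F i) z = \sum_(i <- r | P i) ip (F i) z.
Proof. exact: (big_morph (ip^~ z) (fun x y => ipDl x y z) (ip0l z)). Qed.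

Lemma ip0r z : ip z 0 = 0.
Proof. by rewrite ipC ip0l conjC0. Qed.

Lemma ipDr x y z : ip z (x + y) = ip z x + ip z y.
Proof. by rewrite (ipC x) (ipC y) (ipC (x + y)) ipDl rmorphD. Qed.

Lemma ipZr a x z : ip z (a *: x) = Num.conj a * ip z x.
Proof. by rewrite (ipC x) (ipC (a *: x)) ipZl rmorphM. Qed.

Lemma ipNr x z : ip z (- x) = - ip z x.
Proof. by rewrite (ipC x) (ipC (- x)) ipNl rmorphN. Qed.

Lemma ipBr x y z : ip z (x - y) = ip z x - ip z y.
Proof. by rewrite ipDr ipNr. Qed.

Lemma ip_sumr (I : Type) (r : seq I) (P : pred I) (F : I -> H) z :
  ip z (\sum_(i <- r | P i) F i) = \sum_(i <- r | P i) ip z (F i).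
Proof. exact: (big_morph (ip z) (fun x y => ipDr x y z) (ip0r z)). Qed.

Lemma ipDZ (c : C) x y x' y' :
  ip (x + c *: y) (x' + c *: y') =
  ip x x' + Num.conj c * ip x y' + c * ip y x' + c * Num.conj c * ip y y'.
Proof. by rewrite !ipDl !ipDr !ipZl !ipZr; ring. Qed.

Lemma ipD_le x y : ip (x + y) (x + y) <= 2%:R * ip x x + 2%:R * ip y y.
Proof.
have parallelogram : ip (x + y) (x + y) + ip (x - y) (x - y) =
    2%:R * ip x x + 2%:R * ip y y.
  by rewrite !ipDl !ipNl !ipDr !ipNr; ring.
by rewrite -parallelogram lerDl.
Qed.

Lemma ip_sum_le n (f : 'I_n -> H) :
  ip (\sum_(j < n) f j) (\sum_(j < n) f j) <= 2%:R ^+ n * \sum_(j < n) ip (f j) (f j).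
Proof.
elim: n f => [|n IHn] f; first by rewrite !big_ord0 ip0l mulr0.
rewrite !big_ord_recl exprS -mulrA mulrDr.
apply: (le_trans (ipD_le _ _)); rewrite mulrDr.
apply: lerD; apply: ler_wpM2l => //.
by rewrite -[X in X <= _]mul1r ler_wpM2r // exprn_ege1 // ler1n.
Qed.

Section LinearOperator.
Variable T : H -> H.
Hypothesis linT : lin_op T.

Lemma lin_op0 : T 0 = 0.
Proof.
have h := linT 1 0 0; rewrite scaler0 addr0 scale1r in h.
by apply: (addrI (T 0)); rewrite addr0 -h.
Qed.

Lemma lin_opD x y : T (x + y) = T x + T y.
Proof. by have := linT 1 x y; rewrite !scale1r. Qed.

Lemma lin_opZ a x : T (a *: x) = a *: T x.
Proof. by have := linT a x 0; rewrite !addr0 lin_op0 addr0. Qed.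

Lemma lin_opN x : T (- x) = - T x.
Proof. by rewrite -scaleN1r lin_opZ scaleN1r. Qed.

Lemma lin_opB x y : T (x - y) = T x - T y.
Proof. by rewrite lin_opD lin_opN. Qed.

Lemma lin_op_sum (I : Type) (r : seq I) (P : pred I) (F : I -> H) :
  T (\sum_(i <- r | P i) F i) = \sum_(i <- r | P i) T (F i).
Proof. exact: (big_morph T lin_opD lin_op0). Qed.

End LinearOperator.

Lemma bounded_op_uniform (I : finType) (T : I -> H -> H) :
  (forall k, bounded_op ip (T k)) ->
  exists2 K : R, 0 <= K & forall k x, ip (T k x) (T k x) <= K%:C * ip x x.
Proof.
move=> Tbd; have [M hM] := fin_all_exists (fun k => proj2 (Tbd k)).
exists (\sum_k `|M k|) => [|k x]; first exact: sumr_ge0.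
apply: (le_trans (hM k x)); apply: ler_wpM2r => //; rewrite lecR.
by apply: (le_trans (ler_norm _)); rewrite (bigD1 k) //= lerDl sumr_ge0.
Qed.

Definition ipn n (x y : 'I_n -> H) : C := \sum_(i < n) ip (x i) (y i).

Lemma ipn_ge0 n (x : 'I_n -> H) : 0 <= ipn x x.
Proof. by apply: sumr_ge0 => i _; exact: ip_ge0. Qed.

Lemma ipnC n (x y : 'I_n -> H) : ipn y x = Num.conj (ipn x y).
Proof. by rewrite /ipn rmorph_sum; apply: eq_bigr => i _; rewrite ipC. Qed.

Lemma ipnDZ n (c : C) (x y x' y' : 'I_n -> H) :
  ipn (fun i => x i + c *: y i) (fun i => x' i + c *: y' i) =
  ipn x x' + Num.conj c * ipn x y' + c * ipn y x' + c * Num.conj c * ipn y y'.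
Proof. by rewrite /ipn !mulr_sumr -!big_split; apply: eq_bigr => i _; rewrite ipDZ. Qed.

Definition lin_mx n (Y : 'M[H -> H]_n) : Prop := forall i j, lin_op (Y i j).

Lemma mx_applyDZ n (Y : 'M[H -> H]_n) (c : C) (x y : 'I_n -> H) :
  lin_mx Y ->
  mx_apply Y (fun k => x k + c *: y k) = fun i => mx_apply Y x i + c *: mx_apply Y y i.
Proof.
move=> Ylin; apply: functional_extensionality => i.
rewrite /mx_apply scaler_sumr -big_split /=.
by apply: eq_bigr => j _; rewrite (lin_opD (Ylin i j)) (lin_opZ (Ylin i j)).
Qed.

Lemma mx_apply_bounded n (Y : 'M[H -> H]_n) :
  (forall i j, bounded_op ip (Y i j)) ->
  exists2 K : R, 0 <= K &
    forall xi, ipn (mx_apply Y xi) (mx_apply Y xi) <= K%:C * ipn xi xi.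
Proof.
move=> Ybd; have [M M0 hM] := bounded_op_uniform (fun ij : 'I_n * 'I_n => Ybd ij.1 ij.2).
exists ((2%:R ^+ n * M) *+ n) => [|xi]; first by rewrite mulrn_wge0 // mulr_ge0 // exprn_ge0.
have -> : ((2%:R ^+ n * M) *+ n)%:C * ipn xi xi =
    \sum_(i < n) (2%:R ^+ n * M)%:C * ipn xi xi.
  by rewrite sumr_const card_ord rmorphMn mulrnAl.
apply: ler_sum => i _; apply: (le_trans (ip_sum_le _)).
rewrite rmorphM rmorphXn rmorph_nat -mulrA; apply: ler_wpM2l; first by rewrite exprn_ge0.
by rewrite mulr_sumr; apply: ler_sum => j _; exact: (hM (i, j)).
Qed.

Definition delta n (j : 'I_n) (w : H) : 'I_n -> H := fun k => if k == j then w else 0.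

Lemma sum_delta (M : nmodType) n (F : 'I_n -> H -> M) j w :
  (forall k, F k 0 = 0) -> \sum_(k < n) F k (delta j w k) = F j w.
Proof. by move=> F0; rewrite (bigD1 j) //= /delta eqxx big1 ?addr0 // => k /negbTE ->. Qed.

Lemma ipn_mx_apply_delta n (Y : 'M[H -> H]_n) i j w w' :
  lin_mx Y -> ipn (mx_apply Y (delta j w)) (delta i w') = ip (Y i j w) w'.
Proof.
move=> Ylin; rewrite /ipn (sum_delta (F := fun k => ip (mx_apply Y (delta j w) k))).
  by rewrite /mx_apply (sum_delta (F := Y i)) // => k; exact: lin_op0 (Ylin i k).
by move=> k; exact: ip0r.
Qed.

Definition mx_real_part n (X : 'M[H -> H]_n) (Xs : 'I_n -> 'I_n -> H -> H) : 'M[H -> H]_n :=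
  \matrix_(i, j) (fun u => 2%:R^-1 *: X i j u + 2%:R^-1 *: Xs i j u).

Lemma mx_sa_real_part n (X : 'M[H -> H]_n) Xs :
  (forall i j, adjoint_of ip (X j i) (Xs i j)) -> mx_sa ip (mx_real_part X Xs).
Proof.
move=> Xadj xi eta; rewrite /mx_apply.
under eq_bigr do rewrite ip_suml.
under [RHS]eq_bigr do rewrite ip_sumr.
rewrite [RHS]exchange_big /=; apply: eq_bigr => i _; apply: eq_bigr => j _.
rewrite !mxE ipDl ipDr !ipZl !ipZr fmorphV rmorph_nat [in LHS]addrC.
by rewrite (Xadj j i) (ipC _ (Xs i j _)) -(Xadj i j) -ipC.
Qed.

Hypothesis ip_eq0 : forall x, ip x x = 0 -> x = 0.

Section Compression.
Variable p : H -> H.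
Hypothesis p_lin : lin_op p.
Hypothesis p_idem : forall u, p (p u) = p u.
Hypothesis p_sa : adjoint_of ip p p.

Definition compress (x : H -> H) : H -> H := fun u => p (x (p u)).

Definition compress_mx n (X : 'M[H -> H]_n) : 'M[H -> H]_n := \matrix_(i, j) compress (X i j).

Lemma compressB x y u : compress (fun v => x v - y v) u = compress x u - compress y u.
Proof. exact: lin_opB. Qed.

Lemma compress_mx_eq n (X Y : 'M[H -> H]_n) :
  (forall i j u, compress (X i j) u = compress (Y i j) u) -> compress_mx X = compress_mx Y.
Proof. by move=> XY; apply/eq_mx => i j; apply: functional_extensionality; exact: XY. Qed.

Lemma ip_proj_orth u v : ip (u - p u) (p v) = 0.
Proof. by rewrite -p_sa (lin_opB p_lin) p_idem subrr ip0l. Qed.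

Lemma ipn_compress_mx n (Y : 'M[H -> H]_n) xi :
  (forall k, p (xi k) = xi k) -> ipn (mx_apply (compress_mx Y) xi) xi = ipn (mx_apply Y xi) xi.
Proof.
move=> xiP; apply: eq_bigr => i _; rewrite /mx_apply.
under eq_bigr do rewrite mxE /compress xiP.
by rewrite -(lin_op_sum p_lin) p_sa xiP.
Qed.

Lemma mx_shift_apply n (Y : 'M[H -> H]_n) (e t : R) xi i :
  mx_apply (mx_shift p e t Y) xi i =
  mx_apply Y xi i + (e%:C *: p (xi i) + t%:C *: (xi i - p (xi i))).
Proof.
rewrite /mx_apply (eq_bigr (fun j => Y i j (xi j) +
    (if i == j then e%:C *: p (xi j) + t%:C *: (xi j - p (xi j)) else 0))); last first.
  by move=> j _; rewrite mxE; case: eqP.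
rewrite big_split /=; congr (_ + _).
by rewrite (bigD1 i) //= eqxx big1 ?addr0 // => j /negbTE; rewrite eq_sym => ->.
Qed.

Lemma ipn_mx_shift n (Y : 'M[H -> H]_n) (e t : R) xi :
  ipn (mx_apply (mx_shift p e t Y) xi) xi =
  ipn (mx_apply Y xi) xi + e%:C * ipn (fun k => p (xi k)) (fun k => p (xi k))
  + t%:C * ipn (fun k => xi k - p (xi k)) (fun k => xi k - p (xi k)).
Proof.
rewrite /ipn !mulr_sumr -!big_split /=; apply: eq_bigr => i _.
have range : ip (p (xi i)) (xi i) = ip (p (xi i)) (p (xi i)) by rewrite -{1}p_idem p_sa.
have kernel : ip (xi i - p (xi i)) (xi i) = ip (xi i - p (xi i)) (xi i - p (xi i)).
  by rewrite ipBr ip_proj_orth subr0.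
by rewrite mx_shift_apply ipDl (ipDl (e%:C *: _)) !ipZl range kernel addrA.
Qed.

Lemma compress_ge0_of_shift n (Y : 'M[H -> H]_n) :
  (forall e : R, 0 < e -> exists2 t : R, 0 < t & mx_pos ip (mx_shift p e t Y)) ->
  mx_pos_pH ip p (compress_mx Y).
Proof.
move=> Yshift xi xiP; change (0 <= ipn (mx_apply (compress_mx Y) xi) xi).
rewrite ipn_compress_mx //; apply: (ge0_add_epsC (ipn_ge0 xi)) => e /Yshift [t _ /(_ xi)].
rewrite -/(ipn _ _) ipn_mx_shift.
have -> : (fun k => p (xi k)) = xi by apply: functional_extensionality.
have -> : ipn (fun k => xi k - p (xi k)) (fun k => xi k - p (xi k)) = 0.
  by apply: big1 => k _; rewrite xiP subrr ip0l.
by rewrite mulr0 addr0.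
Qed.

Lemma shift_ge0_of_compress n (Y : 'M[H -> H]_n) :
  (forall i j, bounded_op ip (Y i j)) -> mx_sa ip Y -> mx_pos_pH ip p (compress_mx Y) ->
  forall e : R, 0 < e -> exists2 t : R, 0 < t & mx_pos ip (mx_shift p e t Y).
Proof.
move=> Ybd Ysa Ypos e e0.
have Ylin : lin_mx Y by move=> i j; case: (Ybd i j).
have [K K0 YK] := mx_apply_bounded Ybd.
exists (K / e + K / 2%:R + 1).
  have : 0 <= K / e by rewrite divr_ge0 // ltW.
  have : 0 <= K / 2%:R by rewrite divr_ge0.
  lra.
move=> xi; change (0 <= ipn (mx_apply (mx_shift p e (K / e + K / 2%:R + 1) Y) xi) xi).
rewrite ipn_mx_shift.
set x1 := fun k => p (xi k); set x2 := fun k => xi k - p (xi k).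
have x1P k : p (x1 k) = x1 k by rewrite /x1 p_idem.
have xiE : xi = fun k => x1 k + 1 *: x2 k.
  by apply: functional_extensionality => k; rewrite scale1r addrC subrK.
clearbody x1 x2; subst xi.
have A0 : 0 <= ipn (mx_apply Y x1) x1 by rewrite -ipn_compress_mx //; exact: Ypos.
have saB : ipn (mx_apply Y x1) x2 = Num.conj (ipn (mx_apply Y x2) x1).
  exact: etrans (Ysa x1 x2) (ipnC _ _).
have saD : Num.conj (ipn (mx_apply Y x2) x2) = ipn (mx_apply Y x2) x2.
  by rewrite -ipnC; symmetry; exact: Ysa.
have f1 := ipn_ge0 (fun k => mx_apply Y x2 k + e%:C *: x1 k).
rewrite ipnDZ [Num.conj e%:C]conjc_real (ipnC (mx_apply Y x2) x1) in f1.
have f2 := ipn_ge0 (fun k => x2 k + 1 *: mx_apply Y x2 k).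
rewrite ipnDZ conjC1 !mul1r (ipnC (mx_apply Y x2) x2) in f2.
rewrite mx_applyDZ // ipnDZ conjC1 !mul1r saB.
exact: block_form_ge0 e0 K0 A0 (ipn_ge0 x1) (ipn_ge0 x2) (ipn_ge0 _) saD f1 f2 (YK x2).
Qed.

Lemma compress_lin x : lin_op x -> lin_op (compress x).
Proof. by move=> x_lin a u v; rewrite /compress p_lin x_lin p_lin. Qed.

Lemma compress_eq0 s : lin_op s -> (forall v, ip (s (p v)) (p v) = 0) ->
  forall u, compress s u = 0.
Proof.
move=> s_lin s0 u; apply: ip_eq0.
have cross w : ip (s (p u)) (p w) = 0.
  apply: (@eq0_of_sesquilinear _ _ (ip (s (p w)) (p u))) => c.
  have := s0 (u + c *: w).
  rewrite (lin_opD p_lin) (lin_opZ p_lin) (lin_opD s_lin) (lin_opZ s_lin) ipDZ !s0.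
  by rewrite mulr0 addr0 add0r.
by rewrite /compress p_sa cross.
Qed.

Lemma mx_pos_pH_hermitian n (Z : 'M[H -> H]_n) xi eta :
  lin_mx Z -> mx_pos_pH ip p Z ->
  (forall k, p (xi k) = xi k) -> (forall k, p (eta k) = eta k) ->
  ipn (mx_apply Z eta) xi = Num.conj (ipn (mx_apply Z xi) eta).
Proof.
move=> Zlin Zpos xiP etaP.
apply: (@conj_of_ge0_quadratic _ (ipn (mx_apply Z xi) xi) (ipn (mx_apply Z eta) eta)).
- exact: Zpos.
- exact: Zpos.
move=> c; rewrite -ipnDZ -mx_applyDZ //; apply: Zpos => k.
by rewrite (lin_opD p_lin) (lin_opZ p_lin) xiP etaP.
Qed.

Lemma p_delta n (j : 'I_n) w : p w = w -> forall k, p (delta j w k) = delta j w k.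
Proof. by move=> wP k; rewrite /delta; case: eqP => // _; rewrite lin_op0. Qed.

Lemma compress_adjoint_mx n (X : 'M[H -> H]_n) (Xs : 'I_n -> 'I_n -> H -> H) :
  lin_mx X -> (forall i j, adjoint_of ip (X j i) (Xs i j)) ->
  mx_pos_pH ip p (compress_mx X) ->
  forall i j u, compress (Xs i j) u = compress (X i j) u.
Proof.
move=> Xlin Xadj Xpos i j u.
have Zlin : lin_mx (compress_mx X) by move=> k l; rewrite mxE; exact: compress_lin.
have key v : ip v (compress (Xs i j) u) = ip v (compress (X i j) u).
  have := mx_pos_pH_hermitian Zlin Xpos (p_delta j (p_idem u)) (p_delta i (p_idem v)).
  rewrite !ipn_mx_apply_delta // !mxE /compress !p_idem p_sa p_idem -ipC Xadj => herm.
  by rewrite -p_sa herm p_sa p_idem.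
apply/eqP; rewrite -subr_eq0; apply/eqP/ip_eq0.
by rewrite ipBr key subrr.
Qed.

Section OperatorSystem.
Variable V : (H -> H) -> Prop.
Hypothesis V_os : operator_system ip V.

Lemma V_ext x y : V x -> (forall u, x u = y u) -> V y.
Proof. by move=> Vx xy; rewrite -(functional_extensionality _ _ xy). Qed.

Lemma V_comb (a : C) x y : V x -> V y -> V (fun u => a *: x u + y u).
Proof. by case: V_os => _ _ _ + _; apply. Qed.

Lemma V_scale (a : C) x : V x -> V (fun u => a *: x u).
Proof.
case: V_os => _ _ V0 _ _ Vx.
by apply: (V_ext (V_comb a Vx V0)) => u; rewrite addr0.
Qed.

Lemma V_bounded x : V x -> bounded_op ip x.
Proof. by case: V_os => + _ _ _ _; apply. Qed.

Lemma V_lin x : V x -> lin_op x.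
Proof. by case/V_bounded. Qed.

Lemma V_adjoint x : V x -> exists2 y, V y & adjoint_of ip x y.
Proof. by case: V_os => _ _ _ _; apply. Qed.

Lemma Cp_ip_ge0 s : Cp ip V p s -> forall v, 0 <= ip (s (p v)) (p v).
Proof.
case=> _ _ s_shift v.
have := compress_ge0_of_shift s_shift (fun=> p_idem v).
by rewrite big_ord1 /mx_apply big_ord1 !mxE /compress p_idem p_sa p_idem.
Qed.

Lemma Jp_compress0 x : Jp ip V p x -> forall u, compress x u = 0.
Proof.
case=> k [c [s [sC xE]]] u.
rewrite /compress xE (lin_op_sum p_lin) big1 // => l _.
have [sl_C slN_C] := sC l.
have sl_lin : lin_op (s l) by case: sl_C => /(_ ord0 ord0); rewrite mxE => /V_lin.
rewrite (lin_opZ p_lin) -/(compress (s l) u) (compress_eq0 sl_lin) ?scaler0 // => v.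
apply/eqP; rewrite eq_le Cp_ip_ge0 // andbT -oppr_ge0 -ipNl.
exact: Cp_ip_ge0 slN_C v.
Qed.

Lemma Cp_of_compress0 s : V s -> (forall a b, ip (s a) b = ip a (s b)) ->
  (forall u, compress s u = 0) -> Cp ip V p s.
Proof.
move=> Vs s_sa s0.
have s_mx_sa : mx_sa ip (\matrix_(i < 1, j < 1) s).
  by move=> xi eta; rewrite !big_ord1 /mx_apply !big_ord1 !mxE.
split=> //; first by move=> i j; rewrite mxE.
apply: shift_ge0_of_compress => //; first by move=> i j; rewrite mxE; exact: V_bounded.
by move=> xi _; rewrite big_ord1 /mx_apply big_ord1 !mxE s0 ip0l.
Qed.

Lemma Cp_pm_of_compress0 s : V s -> (forall a b, ip (s a) b = ip a (s b)) ->
  (forall u, compress s u = 0) -> Cp ip V p s /\ Cp ip V p (fun u => - s u).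
Proof.
move=> Vs s_sa s0; split; first exact: Cp_of_compress0.
apply: Cp_of_compress0.
- by apply: (V_ext (V_scale (-1) Vs)) => u; rewrite scaleN1r.
- by move=> a b; rewrite ipNl ipNr s_sa.
- by move=> u; rewrite /compress (lin_opN p_lin) -/(compress s u) s0 oppr0.
Qed.

Lemma compress0_Jp x : V x -> (forall u, compress x u = 0) -> Jp ip V p x.
Proof.
move=> Vx x0; have [y Vy xy] := V_adjoint Vx.
have yx a b : ip (y a) b = ip a (x b) by rewrite ipC -xy -ipC.
have y0 u : compress y u = 0.
  apply: ip_eq0; rewrite {1}/compress p_sa yx p_sa.
  by rewrite (x0 _ : p (x (p _)) = 0) ip0r.
pose s0 u := x u + y u; pose s1 u := 'i%C *: (x u - y u).
have [s0_C s0N_C] : Cp ip V p s0 /\ Cp ip V p (fun u => - s0 u).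
  apply: Cp_pm_of_compress0.
  - by apply: (V_ext (V_comb 1 Vx Vy)) => u; rewrite scale1r.
  - by move=> a b; rewrite ipDl ipDr xy yx addrC.
  - by move=> u; rewrite /compress /s0 (lin_opD p_lin) -!/(compress _ u) x0 y0 addr0.
have [s1_C s1N_C] : Cp ip V p s1 /\ Cp ip V p (fun u => - s1 u).
  apply: Cp_pm_of_compress0.
  - by apply: (V_ext (V_scale 'i%C (V_comb (-1) Vy Vx))) => u; rewrite scaleN1r addrC.
  - by move=> a b; rewrite ipZl ipZr ipDl ipDr ipNl ipNr xy yx conjc_i; ring.
  - move=> u; rewrite /compress /s1 (lin_opZ p_lin) (lin_opB p_lin).
    by rewrite -!/(compress _ u) x0 y0 subrr scaler0.
exists 2, (fun l => if l == ord0 then 2%:R^-1 else - 'i%C / 2%:R),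
  (fun l => if l == ord0 then s0 else s1); split; first by move=> l; case: (l == ord0).
move=> u; rewrite big_ord_recl big_ord1 /s0 /s1 /=; exact: re_im_decomposition.
Qed.

Lemma Ctilde_compress_ge0 n (X : 'M[H -> H]_n) :
  Ctilde ip V p X -> mx_pos_pH ip p (compress_mx X).
Proof.
case=> Y [_ _ Y_shift] YX.
have <- : compress_mx Y = compress_mx X.
  apply: compress_mx_eq => i j u; apply/eqP; rewrite -subr_eq0 -compressB.
  by apply/eqP; exact: Jp_compress0.
exact: compress_ge0_of_shift.
Qed.

Lemma compress_ge0_Ctilde n (X : 'M[H -> H]_n) :
  mx_in V X -> mx_pos_pH ip p (compress_mx X) -> Ctilde ip V p X.
Proof.
move=> XV Xpos.
have Xlin : lin_mx X by move=> i j; exact: V_lin.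
have [Xs XsV Xsadj] := fin_all_exists2 (fun ij : 'I_n * 'I_n => V_adjoint (XV ij.2 ij.1)).
pose Xa i j := Xs (i, j); pose Y := mx_real_part X Xa.
have YV i j : V (Y i j) by rewrite mxE; exact: V_comb _ (XV i j) (V_scale _ (XsV (i, j))).
have YX i j u : compress (Y i j) u = compress (X i j) u.
  have := compress_adjoint_mx Xlin (fun i j => Xsadj (i, j)) Xpos i j u.
  rewrite mxE /compress /= p_lin (lin_opZ p_lin) => ->.
  by rewrite -scalerDl (_ : 2%:R^-1 + 2%:R^-1 = 1) ?scale1r //; field.
have Ysa : mx_sa ip Y by exact: mx_sa_real_part (fun i j => Xsadj (i, j)).
exists Y.
  split=> //; apply: shift_ge0_of_compress => //; first by move=> i j; exact: V_bounded.
  by rewrite (compress_mx_eq YX).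
move=> i j; apply: compress0_Jp.
  by apply: (V_ext (V_comb (-1) (XV i j) (YV i j))) => u; rewrite scaleN1r addrC.
by move=> u; rewrite compressB YX subrr.
Qed.

End OperatorSystem.

End Compression.

End InnerProduct.

Theorem corollary4p10 (R : realType) (H : lmodType R[i]) (ip : H -> H -> R[i])
    (V : (H -> H) -> Prop) (p : H -> H) :
  is_hilbert ip -> operator_system ip V -> V p -> projection ip p ->
  exists psi : (H -> H) -> (H -> H), compression_coi ip V p psi.
Proof.
move=> [[ipDZl ipC ip_ge0 ip_eq0] _] V_os _ [[p_lin _] p_idem p_sa].
exists (compress p); split; first split.
- by move=> a x y _ _ u; rewrite /compress /= p_lin.
- by move=> x Vx; exists x.
- by move=> y [x Vx yx]; exists x => // u; rewrite yx.
- move=> x Vx; split; first exact: compress0_Jp.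
  exact: Jp_compress0.
- by move=> u; rewrite /compress !p_idem.
move=> n X XV; split; first exact: Ctilde_compress_ge0.
exact: compress_ge0_Ctilde.
Qed.
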